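(* Let $\alpha$ be a set and $\odot:\alpha\times\alpha\to\alpha$. Calls $\mathrm{reduce}(\odot,\mathit{rdd})$ have deterministic outcomes if and only if $(\alpha,\odot)$ is a commutative semigroup, i.e. $\odot$ is associative and commutative.
   Context: Lists are finite; $\mathbin{+\!\!+}$ is concatenation. $\mathrm{foldl}(f,b,[\,])=b$, $\mathrm{foldl}(f,b,[x_1,\dots,x_n])=f(\cdots f(f(b,x_1),x_2)\cdots,x_n)$; for a nonempty list, $\mathrm{reducel}(f,[x_1,\dots,x_n])=\mathrm{foldl}(f,x_1,[x_2,\dots,x_n])$. An RDD is a list of lists. A partitioning (for reduce) is a function $P$ sending each nonempty list $L$ to an RDD obtained by splitting $L$ into consecutive nonempty pieces $p_1,\dots,p_n$ with $p_1\mathbin{+\!\!+}\cdots\mathbin{+\!\!+}p_n=L$ and then arbitrarily permuting $[p_1,\dots,p_n]$. $\mathrm{reduce}_{\mathrm{det}}(\odot,[q_1,\dots,q_m])=\mathrm{reducel}(\odot,[\mathrm{reducel}(\odot,q_1),\dots,\mathrm{reducel}(\odot,q_m)])$. Calls $\mathrm{reduce}(\odot,\mathit{rdd})$ have deterministic outcomes if $\mathrm{reduce}_{\mathrm{det}}(\odot,P(L))=\mathrm{reducel}(\odot,L)$ for all nonempty lists $L$ over $\alpha$ and all such partitionings $P$. *)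

From Stdlib Require Import List Permutation.
Import ListNotations.

Definition reducel {A : Type} (f : A -> A -> A) (l : list A) : option A :=
  match l with
  | [] => None
  | x :: xs => Some (fold_left f xs x)
  end.

Fixpoint all_some {A : Type} (l : list (option A)) : option (list A) :=
  match l with
  | [] => Some []
  | None :: _ => None
  | Some x :: r => match all_some r with Some r' => Some (x :: r') | None => None end
  end.

Definition reduce_det {A : Type} (f : A -> A -> A) (rdd : list (list A)) : option A :=
  match all_some (map (reducel f) rdd) with
  | Some vs => reducel f vs
  | None => None
  end.

Definition is_partition_of {A : Type} (L : list A) (rdd : list (list A)) : Prop :=
  exists ps : list (list A),
    Forall (fun p => p <> []) ps /\ concat ps = L /\ Permutation ps rdd.

Definition partitioning {A : Type} (P : list A -> list (list A)) : Prop :=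
  forall L : list A, L <> [] -> is_partition_of L (P L).

Definition deterministic_reduce {A : Type} (f : A -> A -> A) : Prop :=
  forall P : list A -> list (list A), partitioning P ->
  forall L : list A, L <> [] -> reduce_det f (P L) = reducel f L.

Definition associative {A : Type} (f : A -> A -> A) : Prop :=
  forall x y z, f (f x y) z = f x (f y z).
Definition commutative {A : Type} (f : A -> A -> A) : Prop :=
  forall x y, f x y = f y x.

(** If [f] is associative, reducing the pieces and then reducing the partial
    results is a left fold over the concatenation of the pieces; if [f] is
    moreover commutative, a left fold does not depend on the order of its
    elements, so permuting the pieces is harmless.  Conversely, the partitions
    [[x]; [y; z]] of [[x; y; z]] and [[y]; [x]] of [[x; y]] force associativity
    and commutativity. *)

From Stdlib Require Import List Permutation ClassicalEpsilon.
Import ListNotations.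

Lemma Permutation_concat (A : Type) (ps qs : list (list A)) :
  Permutation ps qs -> Permutation (concat ps) (concat qs).
Proof.
  intros Hpq.
  rewrite <- (map_id ps), <- (map_id qs), <- !flat_map_concat_map.
  now apply Permutation_flat_map.
Qed.

Section Reduce.

Variables (A : Type) (f : A -> A -> A).
Hypothesis f_assoc : associative f.

Lemma fold_left_assoc (xs : list A) (a b : A) :
  fold_left f xs (f a b) = f a (fold_left f xs b).
Proof.
  revert b; induction xs as [|x xs IH]; intros b; cbn; [reflexivity|].
  now rewrite f_assoc, IH.
Qed.

Lemma all_some_map_reducel (ps : list (list A)) :
  Forall (fun p => p <> []) ps ->
  exists vs, all_some (map (reducel f) ps) = Some vs /\
             forall v, fold_left f vs v = fold_left f (concat ps) v.
Proof.
  induction 1 as [|[|x xs] ps Hp _ [vs [Hvs Hfold]]]; [now exists [] | congruence |].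
  exists (fold_left f xs x :: vs); cbn; rewrite Hvs; split; [reflexivity|].
  intros v; now rewrite Hfold, fold_left_app, <- fold_left_assoc.
Qed.

Lemma reduce_det_concat (rdd : list (list A)) :
  Forall (fun p => p <> []) rdd -> reduce_det f rdd = reducel f (concat rdd).
Proof.
  intros Hrdd; destruct Hrdd as [|[|x xs] ps Hp Hps]; [reflexivity|congruence|].
  destruct (all_some_map_reducel ps Hps) as [vs [Hvs Hfold]].
  unfold reduce_det; cbn; rewrite Hvs; cbn.
  now rewrite Hfold, fold_left_app.
Qed.

Hypothesis f_comm : commutative f.

Lemma fold_left_perm (l l' : list A) (v : A) :
  Permutation l l' -> fold_left f l v = fold_left f l' v.
Proof.
  intros Hl; revert v.
  induction Hl as [| x l l' _ IH | x y l | l l' l'' _ IH1 _ IH2]; intros v; cbn.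
  - reflexivity.
  - apply IH.
  - now rewrite !f_assoc, (f_comm y x).
  - now rewrite IH1, IH2.
Qed.

Lemma reducel_perm (l l' : list A) :
  Permutation l l' -> reducel f l = reducel f l'.
Proof.
  induction 1 as [| x l l' Hl _ | x y l | l l' l'' _ IH1 _ IH2]; cbn.
  - reflexivity.
  - now rewrite (fold_left_perm _ _ x Hl).
  - now rewrite f_comm.
  - congruence.
Qed.

Lemma reduce_det_partition (L : list A) (rdd : list (list A)) :
  is_partition_of L rdd -> reduce_det f rdd = reducel f L.
Proof.
  intros [ps [Hps [<- Hperm]]].
  rewrite reduce_det_concat by exact (Permutation_Forall Hperm Hps).
  symmetry; now apply reducel_perm, Permutation_concat.
Qed.

End Reduce.

Lemma is_partition_of_single (A : Type) (L : list A) :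
  L <> [] -> is_partition_of L [L].
Proof.
  intros HL; exists [L]; repeat split; auto.
  apply app_nil_r.
Qed.

Lemma deterministic_reduce_partition (A : Type) (f : A -> A -> A)
    (L : list A) (rdd : list (list A)) :
  deterministic_reduce f -> L <> [] -> is_partition_of L rdd ->
  reduce_det f rdd = reducel f L.
Proof.
  intros Hdet HL Hrdd.
  (* [A] has no decidable equality, so singling out [L] needs classical logic. *)
  set (P := fun M => if excluded_middle_informative (M = L) then rdd else [M]).
  assert (HP : partitioning P).
  { intros M HM; unfold P.
    destruct (excluded_middle_informative (M = L)) as [->|_];
      [exact Hrdd | now apply is_partition_of_single]. }
  specialize (Hdet P HP L HL); unfold P in Hdet.
  now destruct (excluded_middle_informative (L = L)).
Qed.

Lemma deterministic_reduce_assoc (A : Type) (f : A -> A -> A) :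
  deterministic_reduce f -> associative f.
Proof.
  intros Hdet x y z.
  assert (Hpart : is_partition_of [x; y; z] [[x]; [y; z]]).
  { exists [[x]; [y; z]]; repeat constructor; discriminate. }
  pose proof (deterministic_reduce_partition A f [x; y; z] _ Hdet ltac:(discriminate) Hpart) as H.
  cbn in H; injection H; auto.
Qed.

Lemma deterministic_reduce_comm (A : Type) (f : A -> A -> A) :
  deterministic_reduce f -> commutative f.
Proof.
  intros Hdet x y.
  assert (Hpart : is_partition_of [x; y] [[y]; [x]]).
  { exists [[x]; [y]]; repeat split; [repeat constructor; discriminate | apply perm_swap]. }
  pose proof (deterministic_reduce_partition A f [x; y] _ Hdet ltac:(discriminate) Hpart) as H.
  cbn in H; injection H; auto.
Qed.

Theorem corollary2 (A : Type) (f : A -> A -> A) :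
  deterministic_reduce f <-> (associative f /\ commutative f).
Proof.
  split.
  - intros Hdet; split.
    + now apply deterministic_reduce_assoc.
    + now apply deterministic_reduce_comm.
  - intros [Hassoc Hcomm] P HP L HL.
    now apply reduce_det_partition, HP.
Qed.
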